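(* Let $A=(a_{ij})$ be an $(n-2)\times n$ integer matrix of rank $n-2$ with columns $a_1,\dots,a_n$ such that some $w\in\mathbb Q^{n-2}$ satisfies $w\cdot a_i=1$ for all $i$, and let $B=(b_{i\ell})$ be an $n\times 2$ integer matrix whose columns form a $\mathbb Z$-basis of $\ker_{\mathbb Z}(A)$. Let $d_B$ be the degree of the toric variety $X=X_B\subset\mathbf P^{n-1}$, $\tilde{\mathcal C}_B$ its dual Chow form and $E_A$ its full discriminant. Then, up to a nonzero constant factor, $$E_A(x_1,\dots,x_n)=(x_1\cdots x_n)^{d_B}\cdot\tilde{\mathcal C}_B\bigl(b_{i\ell}/x_i,\ i=1,\dots,n,\ \ell=1,2\bigr),$$ i.e. $\tilde{\mathcal C}_B$ is evaluated at $y_{i\ell}=b_{i\ell}/x_i$.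
   Context: $X=X_B\subset\mathbf P^{n-1}$ is the (codimension 2) subvariety defined by the toric ideal $I_B\subset k[x_1,\dots,x_n]$ ($k$ of characteristic zero) generated by all binomials $x^{u_+}-x^{u_-}$ with $u=u_+-u_-\in\ker_{\mathbb Z}(A)$; $d_B$ is its degree. With $Y=(y_{i\ell})$ an $n\times2$ matrix of indeterminates, the dual Chow form $\tilde{\mathcal C}_B\in\mathbb Z[y_{i\ell}]$ is the irreducible polynomial (unique up to sign) vanishing exactly when the line $\{(y_{11}+ty_{12}:\cdots:y_{n1}+ty_{n2})\}$ meets $X$; it can be written as a polynomial of degree $d_B$ in the brackets $[\,i\,j\,]=y_{i1}y_{j2}-y_{i2}y_{j1}$. Let $Z=(z_{ij})$ be an $(n-2)\times n$ matrix of indeterminates; for $i<j$ let $Z\langle i,j\rangle$ (resp. $A\langle i,j\rangle$) be the submatrix omitting columns $i,j$ and $B(i,j)$ the submatrix of $B$ of rows $i,j$. The primal Plücker coordinates are $\langle i\,j\rangle=\varepsilon_{ij}\det Z\langle i,j\rangle$, with fixed signs $\varepsilon_{ij}\in\{\pm1\}$ such that $\varepsilon_{ij}\det A\langle i,j\rangle=c\,\det B(i,j)$ for all $i<j$ for some constant $c\neq0$ (the paper fixes this normalization only up to such a global constant). The primal Chow form $\mathcal C_A$ is obtained from $\tilde{\mathcal C}_B$, written in brackets, by replacing each $[\,i\,j\,]$ by $\langle i\,j\rangle$. The full discriminant $E_A$ is the image of $\mathcal C_A$ under $z_{ij}\mapsto a_{ij}x_j$. *)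

From HB Require Import structures.
From mathcomp Require Import all_boot all_order all_algebra all_field.
From mathcomp Require Import mpoly.

Set Implicit Arguments.
Unset Strict Implicit.
Unset Printing Implicit Defensive.

Import Order.TTheory GRing.Theory Num.Theory.
Local Open Scope ring_scope.

(* Conventions.  Indices are 0-based: 'I_n = {0..n-1},  *)
(* the two columns of Y and B are indexed by 'I_2 = {0,1}.            *)
(* Polynomials in the entries of an (p x q) matrix of indeterminates   *)
(* live in {mpoly R[p*q]}, the variable of entry (i,l) being           *)
(* 'X_(mxvec_index i l).  A substitution of the entries by the entries *)
(* of a matrix M is [mmap f (fun v => mxvec M 0 v)].                  *)

Definition col0 : 'I_2 := ord0.
Definition col1 : 'I_2 := ord_max.

Definition zpos (z : int) : nat := `|Num.max z 0|%N.
Definition zneg (z : int) : nat := `|Num.max (- z) 0|%N.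

Definition in_kerZ (m n : nat) (A : 'M[int]_(m, n)) (u : 'cV[int]_n) : Prop :=
  A *m u = 0.

Definition kerZ_basis (m n : nat) (A : 'M[int]_(m, n)) (B : 'M[int]_(n, 2)) : Prop :=
  [/\ A *m B = 0,
      (forall u : 'cV[int]_n, in_kerZ A u -> exists c : 'cV[int]_2, u = B *m c)
    & (forall c : 'cV[int]_2, B *m c = 0 -> c = 0)].

(* A point of P^{n-1}(algC), given by homogeneous coordinates p, lies on   *)
(* X = X_B = V(I_B): p is nonzero and every generating binomial            *)
(* x^{u+} - x^{u-}, u in ker_Z(A), of the toric ideal I_B vanishes at p.  *)
Definition on_toric (m n : nat) (A : 'M[int]_(m, n)) (p : 'I_n -> algC) : Prop :=
  (exists i, p i != 0) /\
  forall u : 'cV[int]_n, in_kerZ A u ->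
    \prod_(i < n) p i ^+ zpos (u i 0) - \prod_(i < n) p i ^+ zneg (u i 0) = 0.

Definition yvar (n : nat) (i : 'I_n) (l : 'I_2) : {mpoly int[n * 2]} :=
  'X_(mxvec_index i l).

Definition dbracket (n : nat) (i j : 'I_n) : {mpoly int[n * 2]} :=
  yvar i col0 * yvar j col1 - yvar i col1 * yvar j col0.

Definition bracket_at (n : nat) (Y : 'M[algC]_(n, 2)) (i j : 'I_n) : algC :=
  Y i col0 * Y j col1 - Y i col1 * Y j col0.

Definition eval_mx (p q : nat) (P : {mpoly int[p * q]}) (M : 'M[algC]_(p, q)) : algC :=
  mmap (fun c : int => c%:~R) (fun v => mxvec M 0 v) P.

Definition eval_vec (n : nat) (P : {mpoly int[n]}) (x : 'I_n -> algC) : algC :=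
  mmap (fun c : int => c%:~R) x P.

Definition irreducible_mpoly (k : nat) (p : {mpoly int[k]}) : Prop :=
  [/\ p != 0, ~~ (p \is a GRing.unit) &
      forall q r : {mpoly int[k]}, p = q * r ->
        (q \is a GRing.unit) \/ (r \is a GRing.unit)].

(* C is a dual Chow form of X_B: an irreducible polynomial in Z[y_{il}]    *)
(* vanishing at a matrix Y of rank 2 exactly when the projective line     *)
(* {s*Y_1 + t*Y_2 : (s:t) in P^1} spanned by the columns meets X.         *)
Definition is_dual_chow_form (m n : nat) (A : 'M[int]_(m, n))
    (C : {mpoly int[n * 2]}) : Prop :=
  irreducible_mpoly C /\
  forall Y : 'M[algC]_(n, 2),
    (exists i j, bracket_at Y i j != 0) ->
    (eval_mx C Y = 0 <->
       exists s t : algC, (s != 0 \/ t != 0) /\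
         on_toric A (fun i => s * Y i col0 + t * Y i col1)).

(* P (in bracket variables [i j], variable of [i j] = 'X_(mxvec_index i j)) *)
(* represents C: C = P([i j]).                                             *)
Definition bracket_subst (n : nat) (P : {mpoly int[n * n]}) : {mpoly int[n * 2]} :=
  mmap (fun c : int => c%:MP) (fun v => mxvec (\matrix_(i < n, j < n) dbracket i j) 0 v) P.

Definition omit2 (n : nat) (i j : 'I_n) (k : 'I_(n - 2)) : 'I_n :=
  nth i [seq x <- enum 'I_n | (x != i) && (x != j)] k.

Definition mx_omit2 (R : Type) (n : nat) (M : 'M[R]_(n - 2, n)) (i j : 'I_n)
  : 'M[R]_(n - 2) := colsub (omit2 i j) M.

Definition mx_rows2 (R : Type) (n : nat) (M : 'M[R]_(n, 2)) (i j : 'I_n) : 'M[R]_2 :=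
  \matrix_(r < 2, l < 2) M (if r == col0 then i else j) l.

Definition Zmat (n : nat) : 'M[{mpoly int[(n - 2) * n]}]_(n - 2, n) :=
  \matrix_(k < n - 2, j < n) 'X_(mxvec_index k j).

(* primal Plücker coordinates <i j> = eps_ij det Z<i,j> (i < j), extended *)
(* antisymmetrically to all ordered pairs (as the brackets are).           *)
Definition pbracket (n : nat) (eps : 'I_n -> 'I_n -> int) (i j : 'I_n)
  : {mpoly int[(n - 2) * n]} :=
  if (i < j)%N then \det (mx_omit2 (Zmat n) i j) *~ eps i j
  else if (j < i)%N then - (\det (mx_omit2 (Zmat n) j i) *~ eps j i)
  else 0.

Definition primal_chow (n : nat) (eps : 'I_n -> 'I_n -> int) (P : {mpoly int[n * n]})
  : {mpoly int[(n - 2) * n]} :=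
  mmap (fun c : int => c%:MP)
       (fun v => mxvec (\matrix_(i < n, j < n) pbracket eps i j) 0 v) P.

Definition full_discriminant (n : nat) (A : 'M[int]_(n - 2, n))
    (eps : 'I_n -> 'I_n -> int) (P : {mpoly int[n * n]}) : {mpoly int[n]} :=
  mmap (fun c : int => c%:MP)
       (fun v => mxvec (\matrix_(k < n - 2, j < n) ((A k j)%:MP * 'X_j)) 0 v)
       (primal_chow eps P).

(* Under z_kj |-> a_kj x_j the minor det Z<i,j> becomes det A<i,j> times the
   product of the x_k with k outside {i,j}.  By the normalisation
   eps_ij det A<i,j> = c det B(i,j), and since det B(i,j) / (x_i x_j) is the
   bracket [i j] at y_il = b_il / x_i, the image of <i j> is
   c (x_1 ... x_n) [i j](b/x).  The bracket polynomial P is homogeneous of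
   degree d_B, so this common factor comes out as (c x_1 ... x_n)^d_B. *)

From Pilot Require Import Defs.
From HB Require Import structures.
From mathcomp Require Import all_boot all_order all_algebra all_field.
From mathcomp Require Import mpoly ring.

Set Implicit Arguments.
Unset Strict Implicit.
Unset Printing Implicit Defensive.

Import Order.TTheory GRing.Theory Num.Theory.
Local Open Scope ring_scope.

Section Substitution.
Variables (k : nat) (R : nzRingType) (S : comNzRingType).

Lemma eq_mmap (f : R -> S) (g1 g2 : 'I_k -> S) (p : {mpoly R[k]}) :
  g1 =1 g2 -> mmap f g1 p = mmap f g2 p.
Proof. by move=> eq_g; apply: eq_bigr => m _; rewrite (mmap1_eq _ eq_g). Qed.

Lemma mmapXU (f : {rmorphism R -> S}) (g : 'I_k -> S) (i : 'I_k) :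
  mmap f g 'X_i = g i.
Proof. by rewrite mmapX mmap1U. Qed.

Lemma mmap_dhomog_scale (f : R -> S) (g : 'I_k -> S) (a : S) (d : nat) (p : {mpoly R[k]}) :
  p \is d.-homog -> mmap f (fun i => a * g i) p = a ^+ d * mmap f g p.
Proof.
move=> /dhomogP homp; rewrite /mmap mulr_sumr !big_seq; apply: eq_bigr => m /homp mdeg_m.
rewrite /mmap1; under eq_bigr do rewrite exprMn; rewrite big_split /=.
by rewrite prodrXr -mdegE mdeg_m mulrCA.
Qed.

Lemma mmap_comp (l : nat) (f : {rmorphism R -> S}) (g : 'I_l -> S)
    (h : 'I_k -> {mpoly R[l]}) (p : {mpoly R[k]}) :
  mmap f g (mmap (@mpolyC l R) h p) = mmap f (fun i => mmap f g (h i)) p.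
Proof.
rewrite [mmap _ h p]/mmap raddf_sum /=; apply: eq_bigr => m _.
by rewrite rmorphM /= mmapC /mmap1 rmorph_prod; under eq_bigr do rewrite rmorphXn.
Qed.

End Substitution.

Lemma det_mx2 (R : comNzRingType) (M : 'M[R]_2) :
  \det M = M 0 0 * M 1 1 - M 0 1 * M 1 0.
Proof.
rewrite (expand_det_row _ 0) !big_ord_recl big_ord0 /cofactor !det_mx11 !mxE /=.
rewrite addr0 expr0 expr1 mul1r mulN1r mulrN.
by congr (_ * M _ _ + - (M _ _ * M _ _)); apply/val_inj.
Qed.

Lemma col0E : Defs.col0 = 0. Proof. exact/val_inj. Qed.
Lemma col1E : Defs.col1 = 1. Proof. exact/val_inj. Qed.

Section OmitTwo.
Variables (n : nat) (i j : 'I_n).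
Hypothesis neq_ij : i != j.

Lemma card_omit2 : #|[pred y : 'I_n | (y != i) && (y != j)]| = (n - 2)%N.
Proof.
have := cardC (pred2 i j); rewrite card2 neq_ij card_ord.
move=> /(congr1 (subn^~ 2%N)); rewrite addKn => <-.
by apply: eq_card => y; rewrite !inE negb_or.
Qed.

Lemma prod_omit2 (R : comNzRingType) (x : 'I_n -> R) :
  (\prod_(k < n - 2) x (omit2 i j k)) * x i * x j = \prod_(k < n) x k.
Proof.
set s := [seq y <- enum 'I_n | (y != i) && (y != j)].
have s_enum : s = enum [pred y : 'I_n | (y != i) && (y != j)] by rewrite /s enumT.
have -> : \prod_(k < n - 2) x (omit2 i j k) = \prod_(y <- s) x y.
  by rewrite (big_nth i) s_enum -cardE card_omit2 big_mkord -s_enum.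
rewrite s_enum big_enum [RHS](bigD1 i) // [in RHS](bigD1 j) /=; last by rewrite eq_sym.
by rewrite [RHS]mulrA -mulrA mulrC.
Qed.

End OmitTwo.

Lemma mmap_det_omit2 (n : nat) (S : comNzRingType) (M : 'M[S]_(n - 2, n)) (i j : 'I_n) :
  mmap intr (fun v => mxvec M 0 v) (\det (mx_omit2 (Zmat n) i j)) = \det (mx_omit2 M i j).
Proof.
rewrite -det_map_mx; congr (\det _); apply/matrixP => a b.
by rewrite !mxE [LHS]mmapXU mxvecE.
Qed.

Lemma det_omit2_scale_cols (n : nat) (R : comNzRingType) (M : 'M[R]_(n - 2, n))
    (x : 'I_n -> R) (i j : 'I_n) :
  \det (mx_omit2 (\matrix_(k, l) (M k l * x l)) i j)
    = \det (mx_omit2 M i j) * \prod_(k < n - 2) x (omit2 i j k).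
Proof.
have -> : mx_omit2 (\matrix_(k, l) (M k l * x l)) i j
          = mx_omit2 M i j *m diag_mx (\row_k x (omit2 i j k)).
  by apply/matrixP => a b; rewrite mul_mx_diag !mxE.
by rewrite det_mulmx det_diag; under [X in _ * X = _]eq_bigr do rewrite mxE.
Qed.

Section Brackets.
Variables (n : nat) (Y : 'M[algC]_(n, 2)).

Lemma bracket_atC (i j : 'I_n) : bracket_at Y j i = - bracket_at Y i j.
Proof. rewrite /bracket_at; ring. Qed.

Lemma bracket_at_scale_rows (x : 'I_n -> algC) (i j : 'I_n) :
  bracket_at (\matrix_(k, l) (Y k l / x k)) i j = bracket_at Y i j / (x i * x j).
Proof. rewrite /bracket_at !mxE invfM; ring. Qed.

Lemma mmap_dbracket (i j : 'I_n) :
  mmap intr (fun v => mxvec Y 0 v) (dbracket i j) = bracket_at Y i j.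
Proof. by rewrite /dbracket /yvar rmorphB !rmorphM /= !mmapXU !mxvecE. Qed.

End Brackets.

Lemma bracket_at_map_intr (n : nat) (B : 'M[int]_(n, 2)) (i j : 'I_n) :
  bracket_at (map_mx intr B) i j = (\det (mx_rows2 B i j))%:~R.
Proof.
by rewrite det_mx2 !mxE /= /bracket_at !mxE rmorphB !rmorphM col0E col1E.
Qed.

Section PluckerSubstitution.
Variables (n : nat) (A : 'M[int]_(n - 2, n)) (B : 'M[int]_(n, 2)).
Variables (eps : 'I_n -> 'I_n -> int) (c : rat).
Hypothesis eps_minors : forall i j : 'I_n, (i < j)%N ->
  (eps i j)%:~R * (\det (mx_omit2 A i j))%:~R = c * (\det (mx_rows2 B i j))%:~R.
Variables (x : 'I_n -> algC).
Hypothesis x_neq0 : forall i, x i != 0.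

Let Ax := \matrix_(k < n - 2, l < n) ((A k l)%:~R * x l).
Let Bx := \matrix_(i < n, l < 2) ((B i l)%:~R / x i).

Lemma mmap_pbracket_lt (i j : 'I_n) : (i < j)%N ->
  mmap intr (fun v => mxvec Ax 0 v) (pbracket eps i j)
    = ratr c * \prod_(k < n) x k * bracket_at Bx i j.
Proof.
move=> lt_ij; have neq_ij : i != j by rewrite -val_eqE /= ltn_eqF.
have eps_minorsC := congr1 (fun r : rat => ratr r : algC) (eps_minors lt_ij).
rewrite rmorphM /= !ratr_int rmorphM /= ratr_int in eps_minorsC.
have -> : Ax = \matrix_(k, l) (map_mx intr A k l * x l).
  by apply/matrixP => k l; rewrite !mxE.
rewrite /pbracket lt_ij raddfMz /= mmap_det_omit2 det_omit2_scale_cols.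
have -> : Bx = \matrix_(k, l) (map_mx intr B k l / x k).
  by apply/matrixP => k l; rewrite !mxE.
rewrite -(prod_omit2 neq_ij) bracket_at_scale_rows bracket_at_map_intr.
rewrite /mx_omit2 -map_mxsub det_map_mx -mulrzl mulrA eps_minorsC.
by field; rewrite !x_neq0.
Qed.

Lemma mmap_pbracket (i j : 'I_n) :
  mmap intr (fun v => mxvec Ax 0 v) (pbracket eps i j)
    = ratr c * \prod_(k < n) x k * bracket_at Bx i j.
Proof.
rewrite {1}/pbracket; case: ltngtP => [lt_ij | lt_ji | eq_ij].
- by have := mmap_pbracket_lt lt_ij; rewrite /pbracket lt_ij.
- have := mmap_pbracket_lt lt_ji; rewrite /pbracket lt_ji => eq_ji.
  by rewrite raddfN /= eq_ji bracket_atC mulrN opprK.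
- have -> : i = j by apply/val_inj.
  by rewrite raddf0 /bracket_at [X in X - _]mulrC subrr mulr0.
Qed.

End PluckerSubstitution.

Theorem proposition3p2 (n : nat) (A : 'M[int]_(n - 2, n)) (B : 'M[int]_(n, 2))
  (hrank : \rank (map_mx (fun z : int => z%:~R : rat) A) = (n - 2)%N)
  (hw : exists w : 'rV[rat]_(n - 2),
          w *m map_mx (fun z : int => z%:~R : rat) A = const_mx 1)
  (hB : kerZ_basis A B)
  (Ct : {mpoly int[n * 2]}) (hC : is_dual_chow_form A Ct)
  (dB : nat) (P : {mpoly int[n * n]}) (hP : P \is dB.-homog)
  (hPC : Ct = bracket_subst P)
  (eps : 'I_n -> 'I_n -> int)
  (heps : forall i j : 'I_n, (i < j)%N -> eps i j = 1 \/ eps i j = -1)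
  (hc : exists c : rat, c != 0 /\
          forall i j : 'I_n, (i < j)%N ->
            (eps i j)%:~R * (\det (mx_omit2 A i j))%:~R
              = c * (\det (mx_rows2 B i j))%:~R) :
  exists c : rat, c != 0 /\
    forall x : 'I_n -> algC, (forall i, x i != 0) ->
      eval_vec (full_discriminant A eps P) x
        = ratr c * (\prod_(i < n) x i) ^+ dB
          * eval_mx Ct (\matrix_(i < n, l < 2) ((B i l)%:~R / x i)).
Proof.
(* The identity is formal: only [hc] and the homogeneity of [P] are needed; the
   remaining hypotheses describe the geometric origin of [Ct] and [eps]. *)
case: hc => c [c_neq0 eps_minors].
exists (c ^+ dB); split; first exact: expf_neq0.
move=> x x_neq0.
rewrite /eval_vec /full_discriminant /primal_chow hPC /eval_mx /bracket_subst !mmap_comp.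
rewrite rmorphXn -exprMn -(mmap_dhomog_scale _ _ _ hP).
apply: eq_mmap => v; case/mxvec_indexP: v => i j; rewrite !mxvecE !mxE.
rewrite mmap_dbracket -(mmap_pbracket eps_minors x_neq0).
apply: eq_mmap => w; case/mxvec_indexP: w => k l; rewrite !mxvecE !mxE.
by rewrite rmorphM /= mmapC mmapXU.
Qed.
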